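(* Let $G$ be a simple and nonabelian finite subgroup of $\mathrm{PGL}(3,\mathbb{C})$. Then there is a subgroup $\widetilde{G} \subset \mathrm{SL}(3,\mathbb{C})$ with $\pi(\widetilde{G}) = G$ such that every projective plane curve invariant under $G$ is defined by a homogeneous polynomial invariant under $\widetilde{G}$.
   Context: $\pi : \mathrm{SL}(3,\mathbb{C})\to\mathrm{PGL}(3,\mathbb{C})$ is the natural homomorphism, and $\mathrm{PGL}(3,\mathbb{C})$ acts on $\mathbb{P}^2$ via $[A]\cdot(a:b:c) = [A(a,b,c)^t]$. A projective plane curve is a nonzero effective divisor on $\mathbb{P}^2$; it is invariant under $G$ if $\sigma_* C = C$ for all $\sigma \in G$. For $A \in \mathrm{GL}(3,\mathbb{C})$ and a homogeneous polynomial $f$, set $f^A(\mathbf{x}) = f(A\mathbf{x})$ (with $\mathbf{x}$ the column vector $(x,y,z)^t$); $f$ is invariant under $\widetilde{G}$ if $f^A = f$ for all $A \in \widetilde{G}$. A curve $C$ is defined by $f$ if $C$ is the divisor of zeros of $f$. *)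

From HB Require Import structures.
From mathcomp Require Import all_boot all_order all_algebra all_fingroup all_solvable.
From mathcomp Require Import reals.
From mathcomp Require Import complex.
From mathcomp Require Import mpoly.
Set Implicit Arguments. Unset Strict Implicit. Unset Printing Implicit Defensive.
Import GRing.Theory.
Local Open Scope ring_scope.

(* The complex numbers are modelled as R[i] = complex R for a realType R
   (any realType is (isomorphic to) the real numbers). *)

(* Ternary forms: polynomials in x, y, z (variables 'X_0, 'X_1, 'X_2). *)
Notation poly3 C := {mpoly C[3]}.

(* f^A (x) = f (A x), with x the column vector (x, y, z)^t :
   substitute 'X_i := \sum_j A i j 'X_j. *)
Definition mx_act (C : comNzRingType) (A : 'M[C]_3) (f : poly3 C) : poly3 C :=
  f \mPo [tuple \sum_(j < 3) A i j *: 'X_j | i < 3].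

Definition mdvd (C : comNzRingType) (p q : poly3 C) : Prop :=
  exists r : poly3 C, q = r * p.

(* units of C[x,y,z] (C a field) are the nonzero constants, i.e. msize = 1 *)
Definition mirreducible (C : comNzRingType) (p : poly3 C) : Prop :=
  (1 < msize p)%N /\
  forall a b : poly3 C, p = a * b -> (msize a <= 1)%N \/ (msize b <= 1)%N.

(* The divisor of zeros of a nonzero form f on P^2 is
   sum_p ord_p(f) [V(p)] over irreducible (homogeneous) p up to scalars;
   two divisors of zeros are equal iff all these multiplicities agree. *)
Definition same_divisor (C : comNzRingType) (f g : poly3 C) : Prop :=
  forall p : poly3 C, mirreducible p ->
    forall k : nat, mdvd (p ^+ k) f <-> mdvd (p ^+ k) g.

(* Push-forward of the divisor of zeros of f under the automorphism [A] of P^2: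
   [A]_* div(f) = div(f^{A^{-1}}). *)
Definition pushforward_poly (C : fieldType) (A : 'M[C]_3) (f : poly3 C) :=
  mx_act (invmx A) f.

(* Equality in PGL(3,C) (for invertible matrices): A ~ B iff A = c B, c != 0 *)
Definition proj_eq (C : fieldType) (A B : 'M[C]_3) : Prop :=
  exists c : C, c != 0 /\ A = c *: B.

(* A finite subgroup of PGL(3,C), given as a finite group gT together with an
   injective group homomorphism gT -> PGL(3,C), described by a choice of
   representative matrices rho g (a faithful projective representation). *)
Definition proj_faithful_rep (C : fieldType) (gT : finGroupType)
  (rho : gT -> 'M[C]_3) : Prop :=
  [/\ forall g, rho g \in unitmx,
      forall g h, proj_eq (rho (g * h)%g) (rho g *m rho h)
    & forall g, proj_eq (rho g) 1%:M -> g = 1%g].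

Definition SL3_subgroup (C : fieldType) (Gt : 'M[C]_3 -> Prop) : Prop :=
  [/\ Gt 1%:M,
      forall A B, Gt A -> Gt B -> Gt (A *m B),
      forall A, Gt A -> Gt (invmx A)
    & forall A, Gt A -> \det A = 1].

Definition proj_image_eq (C : fieldType) (gT : finGroupType)
  (rho : gT -> 'M[C]_3) (Gt : 'M[C]_3 -> Prop) : Prop :=
  (forall A, Gt A -> exists g, proj_eq A (rho g)) /\
  (forall g, exists A, Gt A /\ proj_eq A (rho g)).

(* Representatives in GL(3) of the elements of G are defined only up to
   scalars, but the commutator A^-1 B^-1 A B of two representatives is not, and
   it has determinant 1.  A simple nonabelian group is perfect, so the products
   of such commutators form a subgroup Gt of SL(3) that maps onto G.  If the
   divisor of f is G-invariant then, by unique factorization in C[x,y,z]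
   (obtained from Gauss's lemma), f^A = a f for every representative A; the
   scalars cancel in each commutator, so f itself is invariant under Gt. *)

From HB Require Import structures.
From mathcomp Require Import all_boot all_order all_algebra all_fingroup all_solvable.
From mathcomp Require Import reals.
From mathcomp Require Import complex.
From mathcomp Require Import mpoly.
From mathcomp Require Import boolp fraction generic_quotient.
From mathcomp Require Import zify ring.
Set Implicit Arguments. Unset Strict Implicit. Unset Printing Implicit Defensive.
Import GRing.Theory.
Local Open Scope ring_scope.

Section Divisibility.
Variable R : idomainType.
Implicit Types a b c p q : R.

Definition dvdr a b : Prop := exists r, b = r * a.

Definition irreducibler p : Prop :=
  [/\ p != 0, p \isn't a GRing.unit &
      forall a b, p = a * b -> a \is a GRing.unit \/ b \is a GRing.unit].

Definition irreducibles_prime : Prop :=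
  forall p, irreducibler p -> forall a b, dvdr p (a * b) -> dvdr p a \/ dvdr p b.

Definition factor_measure (mu : R -> nat) : Prop :=
  (forall a b, a != 0 -> b != 0 -> mu (a * b) = (mu a + mu b)%N) /\
  (forall a, a != 0 -> mu a = 0%N <-> a \is a GRing.unit).

(* Existence of factorizations is encoded by a measure that strictly
   decreases along proper divisors, uniqueness by the primality of irreducibles. *)
Definition ufd : Prop := (exists mu, factor_measure mu) /\ irreducibles_prime.

Lemma dvdr_mull a b c : dvdr a b -> dvdr a (c * b).
Proof. by move=> [r ->]; exists (c * r); rewrite mulrA. Qed.

Lemma dvdr_mulr a b c : dvdr a b -> dvdr a (b * c).
Proof. by move=> [r ->]; exists (r * c); rewrite mulrAC. Qed.

Lemma dvdr_trans a b c : dvdr a b -> dvdr b c -> dvdr a c.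
Proof. by move=> [r ->] [s ->]; exists (s * r); rewrite mulrA. Qed.

Lemma dvdrB a b c : dvdr a b -> dvdr a c -> dvdr a (b - c).
Proof. by move=> [r ->] [s ->]; exists (r - s); rewrite mulrBl. Qed.

Lemma dvdr_sum (I : Type) (r : seq I) (P : pred I) (F : I -> R) a :
  (forall i, P i -> dvdr a (F i)) -> dvdr a (\sum_(i <- r | P i) F i).
Proof.
move=> dvF; elim/big_ind: _ => //; first by exists 0; rewrite mul0r.
by move=> _ _ [u ->] [v ->]; exists (u + v); rewrite mulrDl.
Qed.

Lemma dvdr_pmul2r a b c : c != 0 -> dvdr (a * c) (b * c) -> dvdr a b.
Proof. by move=> c0 [r]; rewrite mulrA => /(mulIf c0) ->; exists r. Qed.

Lemma irreducible_factor mu : factor_measure mu ->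
  forall c, c != 0 -> c \isn't a GRing.unit ->
  exists p c', [/\ irreducibler p, c = p * c' & (mu c' < mu c)%N].
Proof.
move=> [muM muU] c; have [n] := ubnP (mu c); elim: n c => // n IH c mu_c c0 cU.
have mu_pos x : x != 0 -> x \isn't a GRing.unit -> (0 < mu x)%N.
  by move=> x0 xU; rewrite lt0n; apply: contra xU => /eqP /(muU _ x0).
have mu1 : mu 1 = 0%N by apply/(muU _ (oner_neq0 _)); exact: unitr1.
have [c_irr|c_red] := pselect (irreducibler c).
  by exists c, 1; rewrite mulr1 mu1 mu_pos.
have [a [b [Ec aU bU]]] : exists a b, [/\ c = a * b, a \isn't a GRing.unit
                                       & b \isn't a GRing.unit].
  apply: contrapT => nofac; apply: c_red; split => // a b cab.
  by apply: contrapT => /not_orP[/negP aU /negP bU]; apply: nofac; exists a, b.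
subst c.
have a0 : a != 0 by apply: contraNneq c0 => ->; rewrite mul0r.
have b0 : b != 0 by apply: contraNneq c0 => ->; rewrite mulr0.
have mub := mu_pos b b0 bU; rewrite muM // in mu_c *.
have lt_a : (mu a < n)%N by lia.
have [p [a' [p_irr Ea lt_a']]] := IH a lt_a a0 aU; subst a.
have a'0 : a' != 0 by apply: contraNneq a0 => ->; rewrite mulr0.
exists p, (a' * b); rewrite mulrA muM //; split => //; lia.
Qed.

Section Ufd.
Hypothesis R_ufd : ufd.

Lemma dvdr_pow_coprime q a x k :
  irreducibler q -> ~ dvdr q a -> dvdr (q ^+ k) (x * a) -> dvdr (q ^+ k) x.
Proof.
move=> q_irr qNa; elim: k x => [|k IH] x; first by exists x; rewrite mulr1.
have [q0 _ _] := q_irr; move=> dvx.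
have : dvdr q (x * a) by apply: dvdr_trans dvx; exists (q ^+ k); rewrite exprS mulrC.
case/(R_ufd.2 _ q_irr) => // -[x1 Ex]; subst x.
have /IH [r ->] : dvdr (q ^+ k) (x1 * a).
  by apply: (dvdr_pmul2r q0); rewrite mulrAC -exprSr.
by exists r; rewrite exprSr mulrA.
Qed.

Lemma dvdr_prime_powers f g : f != 0 -> g != 0 ->
  (forall p, irreducibler p -> forall k, dvdr (p ^+ k) f -> dvdr (p ^+ k) g) ->
  dvdr f g.
Proof.
have [[mu mu_f] _] := R_ufd; have [muM muU] := mu_f.
have [n] := ubnP (mu f); elim: n f g => // n IH f g mu_f_lt f0 g0 dv_fg.
have [fU|fNU] := boolP (f \is a GRing.unit); first by exists (g / f); rewrite divrK.
have [p [f1 [p_irr Ef lt_f1]]] := irreducible_factor mu_f f0 fNU.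
have [p0 _ p_min] := p_irr.
have f10 : f1 != 0 by apply: contraNneq f0 => e; rewrite Ef e mulr0.
have [g1 Eg] : dvdr p g.
  by have := dv_fg p p_irr 1%N; rewrite expr1; apply; exists f1; rewrite Ef mulrC.
have g10 : g1 != 0 by apply: contraNneq g0 => e; rewrite Eg e mul0r.
suff [r Er] : dvdr f1 g1 by exists r; rewrite Eg Er Ef -mulrA [f1 * _]mulrC.
apply: IH f10 g10 _ => [|q q_irr k [r Ef1]]; first lia.
have [q0 qNU _] := q_irr.
have [[s Ep]|qNp] := pselect (dvdr q p).
  have sU : s \is a GRing.unit by case: (p_min _ _ Ep) => // qU; rewrite qU in qNU.
  have [t Et] : dvdr (q ^+ k.+1) g.
    by apply: dv_fg => //; exists (r * s); rewrite Ef Ef1 Ep exprSr; ring.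
  have : g1 * s = t * q ^+ k by apply: (mulIf q0); rewrite -mulrA -Ep -Eg Et exprSr mulrA.
  by move=> /(canRL (mulrK sU)) ->; exists (t / s); rewrite mulrAC.
apply: (dvdr_pow_coprime q_irr qNp); rewrite -Eg; apply: dv_fg => //.
by exists (p * r); rewrite Ef Ef1 mulrA.
Qed.

End Ufd.
End Divisibility.

Lemma polyC_unit (R : idomainType) (c : R) : (c%:P \is a GRing.unit) = (c \is a GRing.unit).
Proof.
rewrite poly_unitE size_polyC coefC eqxx.
by have [->|] := eqVneq c 0; rewrite ?unitr0 ?andbF.
Qed.

Lemma irredp_dvdpM (F : fieldType) (p a b : {poly F}) :
  irreducible_poly p -> p %| a * b -> (p %| a) || (p %| b).
Proof.
move=> p_irr dv_ab; have [cop|ncop] := boolP (coprimep p a).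
  by rewrite -(Gauss_dvdpr b cop) dv_ab orbT.
have /(p_irr.2 _ ncop) eq_gp := dvdp_gcdl p a.
by rewrite -(eqp_dvdl _ eq_gp) dvdp_gcdr.
Qed.

Section GaussLemma.
Variables (R : idomainType) (mu : R -> nat).
Hypotheses (mu_measure : factor_measure mu) (R_prime : irreducibles_prime R).
Implicit Types (c : R) (A B G H P : {poly R}).

Lemma dvdr_polyC c A : dvdr c%:P A <-> forall i, dvdr c A`_i.
Proof.
split=> [[r ->] i|/choice [r Ar]]; first by rewrite coefMC; exists r`_i.
exists (\poly_(i < size A) r i); apply/polyP => i.
by rewrite coefMC coef_poly; case: ltnP => // /(nth_default 0) ->; rewrite mul0r.
Qed.

Lemma polyC_irreducible_prime c A B :
  irreducibler c -> dvdr c%:P (A * B) -> dvdr c%:P A \/ dvdr c%:P B.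
Proof.
move=> c_irr /dvdr_polyC dvAB; apply: contrapT => /not_orP[/dvdr_polyC nA /dvdr_polyC nB].
have least_coef (Q : {poly R}) : ~ (forall i, dvdr c Q`_i) ->
    exists i, ~ dvdr c Q`_i /\ forall k, (k < i)%N -> dvdr c Q`_k.
  move/existsNP=> -[i0 /(introT (asboolPn _)) Qi0].
  have [i /asboolPn Qi minQ] := ex_minnP (ex_intro (fun i => ~~ `[< dvdr c Q`_i >]) i0 Qi0).
  exists i; split=> // k lt_ki; apply: contrapT => /(introT (asboolPn _)) /minQ.
  by rewrite leqNgt lt_ki.
have [[i [Ai minA]] [j [Bj minB]]] := (least_coef A nA, least_coef B nB).
have lt_i : (i < (i + j).+1)%N by rewrite ltnS leq_addr.
have := dvAB (i + j)%N; rewrite coefM (bigD1 (Ordinal lt_i)) //= addKn.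
set rest := \sum_(k | _) _ => dv_sum.
have dv_rest : dvdr c rest.
  apply: dvdr_sum => k ne_ki; have [lt_ki|le_ik] := ltnP k i.
    by apply: dvdr_mulr; apply: minA.
  apply: dvdr_mull; apply: minB.
  have ne_ik : i != k :> nat by apply: contra ne_ki => /eqP e; apply/eqP/val_inj.
  have := ltn_ord k; lia.
have : dvdr c (A`_i * B`_j) by rewrite -[_ * _](addrK rest); apply: dvdrB.
by case/(R_prime c_irr).
Qed.

Definition poly_measure (P : {poly R}) : nat := ((size P).-1 + mu (lead_coef P))%N.

Lemma poly_factor_measure : factor_measure poly_measure.
Proof.
have [muM muU] := mu_measure; split=> [A B A0 B0|A A0].
  rewrite /poly_measure size_mul // lead_coefM muM ?lead_coef_eq0 //.
  have := size_poly_gt0 A; have := size_poly_gt0 B; rewrite A0 B0; lia.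
have lc0 : lead_coef A != 0 by rewrite lead_coef_eq0.
rewrite /poly_measure poly_unitE; have [s1|s_ne1] := eqVneq (size A) 1%N.
  by have := muU _ lc0; rewrite s1 add0n lead_coefE s1.
have := size_poly_gt0 A; rewrite A0 => s_gt0.
split=> [|/andP[/eqP s1]] //; lia.
Qed.

Local Notation "x %:F" := (@tofrac R x).
Local Notation frac_poly := (map_poly (@tofrac R)).

Lemma tofrac_inj : injective (@tofrac R).
Proof. by move=> x y /eqP; rewrite tofrac_eq => /eqP. Qed.

Lemma frac_poly_inj : injective frac_poly.
Proof. exact: (map_inj_poly tofrac_inj (rmorph0 _)). Qed.

Lemma size_frac_poly P : size (frac_poly P) = size P.
Proof. exact: (size_map_inj_poly tofrac_inj (rmorph0 _)). Qed.

Lemma tofrac_repr (x : {fraction R}) : exists a b, b != 0 /\ x = a%:F / b%:F.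
Proof.
elim/quotW: x => r; exists r.1, r.2; split; first exact: denom_ratioP.
unlock FracField.tofrac.
have := FracField.pi_inv (Ratio \d_r 1).
have := FracField.pi_mul (Ratio \n_r 1) (FracField.invf (Ratio \d_r 1)).
rewrite /FracField.mulf /FracField.invf.
rewrite !numden_Ratio ?oner_neq0 ?denom_ratioP // mulr1 mul1r Ratio_numden.
by move=> -> ->.
Qed.

Lemma clear_denominators (u : {poly {fraction R}}) :
  exists c P, c != 0 /\ frac_poly P = c%:F *: u.
Proof.
elim/poly_ind: u => [|u k [c [P [c0 EP]]]].
  by exists 1, 0; rewrite oner_neq0 scaler0 map_poly0.
have [a [b [b0 ->]]] := tofrac_repr k.
have bF0 : b%:F != 0 by rewrite tofrac_eq0.
exists (c * b), (b%:P * P * 'X + (c * a)%:P); split; first by rewrite mulf_neq0.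
rewrite rmorphD rmorphM rmorphM /= map_polyX !map_polyC /= EP scalerDr tofracM.
rewrite -!mul_polyC !polyCM !tofracM; congr (_ + _); first by rewrite polyCM; ring.
by rewrite -!polyCM mulrACA divff // mulr1.
Qed.

Lemma dvdr_polyC_mul c G H : c != 0 -> dvdr c%:P (G * H) ->
  exists c1 c2, [/\ c = c1 * c2, dvdr c1%:P G & dvdr c2%:P H].
Proof.
have [muM muU] := mu_measure.
have [n] := ubnP (mu c); elim: n c G H => // n IH c G H mu_c c0 [r EGH].
have [cU|cNU] := boolP (c \is a GRing.unit).
  exists c, 1; rewrite mulr1; split=> //; last by exists H; rewrite polyC1 mulr1.
  by exists (c^-1%:P * G); rewrite mulrAC -polyCM mulVr // polyC1 mul1r.
have [p [c' [p_irr Ec lt_c']]] := irreducible_factor mu_measure c0 cNU.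
have [p0 _ _] := p_irr; have pP0 : p%:P != 0 by rewrite polyC_eq0.
have c'0 : c' != 0 by apply: contraNneq c0 => e; rewrite Ec e mulr0.
have mu_c' : (mu c' < n)%N by lia.
have EGH' : G * H = r * c'%:P * p%:P by rewrite EGH Ec polyCM -mulrA [_ * p%:P]mulrC mulrA.
have [[G1 EG]|[H1 EH]] := polyC_irreducible_prime p_irr (ex_intro _ _ EGH').
  have /IH [] // : dvdr c'%:P (G1 * H).
    by exists r; apply: (mulIf pP0); rewrite mulrAC -EG EGH'.
  move=> c1 [c2 [Ec' [G2 EG1] dvH]]; exists (p * c1), c2.
  split=> //; first by rewrite Ec Ec' mulrA.
  by exists G2; rewrite EG EG1 polyCM -mulrA [c1%:P * _]mulrC.
have /IH [] // : dvdr c'%:P (G * H1).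
  by exists r; apply: (mulIf pP0); rewrite -[G * H1 * _]mulrA -EH EGH'.
move=> c1 [c2 [Ec' dvG [H2 EH1]]]; exists c1, (p * c2).
split=> //; first by rewrite Ec Ec' mulrCA.
by exists H2; rewrite EH EH1 polyCM -mulrA [c2%:P * _]mulrC.
Qed.

Lemma polyC_mul_factor c P G H : c != 0 -> c%:P * P = G * H ->
  exists G' H', [/\ P = G' * H', size G' = size G & size H' = size H].
Proof.
move=> c0 E; have [|c1 [c2 [Ec [G' EG] [H' EH]]]] := dvdr_polyC_mul c0 (G := G) (H := H).
  by exists P; rewrite -E mulrC.
have [c10 c20] : c1 != 0 /\ c2 != 0 by apply/andP; rewrite -negb_or -mulf_eq0 -Ec.
exists G', H'; split; last 2 first.
- by rewrite EG mulrC size_Cmul.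
- by rewrite EH mulrC size_Cmul.
apply: (@mulfI _ c%:P); first by rewrite polyC_eq0.
by rewrite E EG EH Ec polyCM; ring.
Qed.

Definition primitive_poly P : Prop := forall p, irreducibler p -> ~ dvdr p%:P P.

Lemma primitive_dvdr c A P v :
  primitive_poly P -> c != 0 -> c%:P * A = v * P -> dvdr P A.
Proof.
move=> P_prim c0 E.
have [|c1 [c2 [Ec [v1 Ev] dvP]]] := dvdr_polyC_mul c0 (G := v) (H := P).
  by exists A; rewrite -E mulrC.
have c10 : c1 != 0 by apply: contraNneq c0 => e; rewrite Ec e mul0r.
have c20 : c2 != 0 by apply: contraNneq c0 => e; rewrite Ec e mulr0.
have c2U : c2 \is a GRing.unit.
  apply: contraT => c2NU; have [p [c' [p_irr Ec2 _]]] := irreducible_factor mu_measure c20 c2NU.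
  by case: (P_prim p p_irr); apply: dvdr_trans dvP; exists c'%:P; rewrite Ec2 polyCM mulrC.
have c1P0 : c1%:P != 0 by rewrite polyC_eq0.
have /(mulfI c1P0) E2 : c1%:P * (c2%:P * A) = c1%:P * (v1 * P).
  by rewrite mulrA -polyCM -Ec E Ev -mulrA mulrCA.
by exists (c2^-1%:P * v1); rewrite -mulrA -E2 mulrA -polyCM mulVr // polyC1 mul1r.
Qed.

Lemma irreducible_primitive P : irreducibler P -> (1 < size P)%N -> primitive_poly P.
Proof.
move=> [P0 _ P_min] sP p [p0 pNU _] [Q EP].
have [QU|] := P_min _ _ EP; last by rewrite polyC_unit (negbTE pNU).
have Q0 : Q != 0 by apply: contraNneq P0 => e; rewrite EP e mul0r.
move: sP; rewrite EP size_mul ?polyC_eq0 // size_polyC p0 addn1 /=.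
by move: QU; rewrite poly_unitE => /andP[/eqP ->].
Qed.

Lemma irreducible_frac_poly P :
  irreducibler P -> (1 < size P)%N -> irreducible_poly (frac_poly P).
Proof.
move=> P_irr sP; have [P0 _ P_min] := P_irr.
split=> [|q sq /dvdpP [h Eh]]; first by rewrite size_frac_poly.
have [c1 [Q [c10 EQ]]] := clear_denominators q.
have [c2 [H [c20 EH]]] := clear_denominators h.
have c0 : c2 * c1 != 0 by rewrite mulf_neq0.
have /(polyC_mul_factor c0) [H' [Q' [EP sH sQ]]] : (c2 * c1)%:P * P = H * Q.
  apply: frac_poly_inj; rewrite [LHS]rmorphM [RHS]rmorphM /= map_polyC EQ EH Eh.
  have -> : ((c2 * c1)%:F)%:P = (c2%:F)%:P * (c1%:F)%:P by rewrite tofracM polyCM.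
  by rewrite -!mul_polyC; ring.
have size_cleared c (u : {poly {fraction R}}) U :
    c != 0 -> frac_poly U = c%:F *: u -> size U = size u.
  by move=> c0' EU; rewrite -size_frac_poly EU size_scale ?tofrac_eq0.
case: (P_min _ _ EP); rewrite poly_unitE => /andP[/eqP s1 _].
  have /size_poly1P [h0 h00 Eh0] : size h == 1%N.
    by rewrite -(size_cleared _ _ _ c20 EH) -sH s1.
  by rewrite Eh Eh0 mul_polyC eqp_sym eqp_scale.
by case/negP: sq; rewrite -(size_cleared _ _ _ c10 EQ) -sQ s1.
Qed.

Lemma frac_dvdp_dvdr P A : primitive_poly P -> frac_poly P %| frac_poly A -> dvdr P A.
Proof.
move=> P_prim /dvdpP [w Ew]; have [c [v [c0 Ev]]] := clear_denominators w.
apply: (primitive_dvdr P_prim c0 (v := v)); apply: frac_poly_inj.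
by rewrite [LHS]rmorphM [RHS]rmorphM /= map_polyC Ev Ew mul_polyC scalerAl.
Qed.

Lemma poly_irreducibles_prime : irreducibles_prime {poly R}.
Proof.
move=> P P_irr A B dvAB; have [P0 PNU P_min] := P_irr.
have [sP|sP] := leqP (size P) 1.
  have EP := size1_polyC sP; rewrite EP in dvAB *; apply: polyC_irreducible_prime => //.
  split; [by rewrite -polyC_eq0 -EP | by rewrite -polyC_unit -EP |].
  by move=> a b Eab; rewrite -!(polyC_unit (R := R)); apply: P_min; rewrite EP Eab polyCM.
have P_prim := irreducible_primitive P_irr sP.
have : frac_poly P %| frac_poly A * frac_poly B.
  by case: dvAB => r E; rewrite -rmorphM E rmorphM dvdp_mull.
case/(irredp_dvdpM (irreducible_frac_poly P_irr sP))/orP => /(frac_dvdp_dvdr P_prim).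
  by left.
by right.
Qed.

End GaussLemma.

Lemma poly_ufd (R : idomainType) : ufd R -> ufd {poly R}.
Proof.
move=> [[mu mu_measure] R_prime]; split.
  by exists (poly_measure mu); exact: poly_factor_measure.
exact: poly_irreducibles_prime mu_measure R_prime.
Qed.

Lemma field_ufd (F : fieldType) : ufd F.
Proof.
split=> [|p [p0 pNU _]]; last by rewrite unitfE p0 in pNU.
by exists (fun=> 0%N); split=> // a a0; rewrite unitfE a0.
Qed.

Section RingIsomorphism.
Variables (A B : idomainType) (f : {rmorphism A -> B}) (g : B -> A).
Hypotheses (fK : cancel f g) (gK : cancel g f).

Lemma iso_unit x : (f x \is a GRing.unit) = (x \is a GRing.unit).
Proof.
apply/idP/idP => [/unitrPr [y fxy]|/(rmorph_unit f) //].
by apply/unitrPr; exists (g y); apply: (can_inj fK); rewrite rmorphM gK fxy rmorph1.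
Qed.

Lemma iso_eq0 x : (f x == 0) = (x == 0).
Proof. by rewrite -(rmorph0 f) (inj_eq (can_inj fK)). Qed.

Lemma iso_dvdr x y : dvdr (f x) (f y) <-> dvdr x y.
Proof.
split=> [[r fy]|[r ->]]; last by exists (f r); rewrite rmorphM.
by exists (g r); apply: (can_inj fK); rewrite rmorphM gK fy.
Qed.

Lemma iso_irreducible p : irreducibler (f p) <-> irreducibler p.
Proof.
rewrite /irreducibler iso_eq0 iso_unit; split=> -[p0 pNU p_min]; split=> // a b.
  by move=> Ep; rewrite -!iso_unit; apply: p_min; rewrite Ep rmorphM.
move=> Ep; rewrite -[a]gK -[b]gK !iso_unit; apply: p_min.
by apply: (can_inj fK); rewrite rmorphM !gK.
Qed.

Lemma iso_ufd : ufd A -> ufd B.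
Proof.
move=> [[mu [muM muU]] A_prime]; split.
  exists (mu \o g); split=> [a b a0 b0|a a0] /=.
    have -> : g (a * b) = g a * g b by apply: (can_inj fK); rewrite rmorphM !gK.
    by rewrite muM // -iso_eq0 gK.
  have ga0 : g a != 0 by rewrite -iso_eq0 gK.
  by apply: iff_trans (muU _ ga0) _; rewrite -iso_unit gK.
move=> p; rewrite -[p]gK => /iso_irreducible p_irr a b.
by rewrite -[a]gK -[b]gK -rmorphM !iso_dvdr; apply: A_prime.
Qed.

End RingIsomorphism.

Lemma rmorph_mpoly_ext n (R S : nzRingType) (f g : {rmorphism {mpoly R[n]} -> S}) :
  (forall c, f c%:MP = g c%:MP) -> (forall i, f 'X_i = g 'X_i) -> f =1 g.
Proof.
move=> fgC fgX; elim/mpolyind => [|c m p _ _ IH]; first by rewrite !rmorph0.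
rewrite !rmorphD IH -mul_mpolyC !rmorphM fgC mpolyXE_id !rmorph_prod.
by congr (_ * _ + _); apply: eq_bigr => i _; rewrite !rmorphXn fgX.
Qed.

Lemma rmorph_poly_ext (R S : nzRingType) (f g : {rmorphism {poly R} -> S}) :
  (forall c, f c%:P = g c%:P) -> f 'X = g 'X -> f =1 g.
Proof.
move=> fgC fgX; elim/poly_ind => [|p c IH]; first by rewrite !rmorph0.
by rewrite !rmorphD !rmorphM IH fgX fgC.
Qed.

Section MultivariateAsUnivariate.
Variables (n : nat) (R : comNzRingType).

Lemma muniX_widen (j : 'I_n) :
  muni 'X_(widen_ord (leqnSn n) j) = ('X_j)%:P :> {poly {mpoly R[n]}}.
Proof.
rewrite /muni mmapX mmap1U /=.
case: splitP => k /= Ek; first by congr ('X__)%:P; apply: val_inj.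
by have := ltn_ord j; rewrite Ek ord1 addn0 ltnn.
Qed.

Lemma muniX_max : muni 'X_ord_max = 'X :> {poly {mpoly R[n]}}.
Proof.
rewrite /muni mmapX mmap1U /=.
by case: splitP => // k /= Ek; have := ltn_ord k; rewrite -Ek ltnn.
Qed.

Lemma mwidenXU (j : 'I_n) :
  mwiden 'X_j = 'X_(widen_ord (leqnSn n) j) :> {mpoly R[n.+1]}.
Proof. by rewrite mwidenX mnmwiden1. Qed.

Lemma muni_mwiden : @muni n R \o @mwiden n R =1 polyC.
Proof.
apply: rmorph_mpoly_ext => [c|j] /=.
  by rewrite mwidenC muniC.
by rewrite mwidenXU muniX_widen.
Qed.

Lemma muniK : cancel (@muni n R) (horner_eval 'X_ord_max \o map_poly (@mwiden n R)).
Proof.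
apply: (rmorph_mpoly_ext (f := horner_eval 'X_ord_max \o map_poly (@mwiden n R) \o @muni n R)
                         (g := idfun)) => [c|i] /=.
  by rewrite muniC map_polyC horner_evalE hornerC; exact: mwidenC.
have [j ->|->] := unliftP ord_max i; last by rewrite muniX_max map_polyX horner_evalE hornerX.
have -> : lift ord_max j = widen_ord (leqnSn n) j by apply: val_inj; exact: lift_max.
by rewrite muniX_widen map_polyC horner_evalE hornerC; exact: mwidenXU.
Qed.

Lemma muniKV : cancel (horner_eval 'X_ord_max \o map_poly (@mwiden n R)) (@muni n R).
Proof.
apply: (rmorph_poly_ext (f := @muni n R \o horner_eval 'X_ord_max \o map_poly (@mwiden n R))
                        (g := idfun)) => [c|] /=.
  by rewrite map_polyC horner_evalE hornerC; exact: muni_mwiden.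
by rewrite map_polyX horner_evalE hornerX muniX_max.
Qed.

End MultivariateAsUnivariate.

Lemma mpoly_ufd n (F : fieldType) : ufd {mpoly F[n]}.
Proof.
elim: n => [|n IH].
  apply: (iso_ufd (f := @mpolyC 0 F) (g := fun p => p@_0%MM)) (field_ufd F) => [c|p].
    by rewrite mcoeffC eqxx mulr1.
  by rewrite /= -nvar0_mpolyC.
apply: (iso_ufd (f := horner_eval 'X_ord_max \o map_poly (@mwiden n F)) (g := @muni n F)).
- exact: muniKV.
- exact: muniK.
- exact: poly_ufd IH.
Qed.

Section MatrixAction.
Variable C : comNzRingType.
Implicit Types (A B : 'M[C]_3) (f : {mpoly C[3]}).

Lemma mx_actX A i : mx_act A 'X_i = \sum_(j < 3) A i j *: 'X_j.
Proof. by rewrite /mx_act comp_mpolyXU -tnth_nth tnth_mktuple. Qed.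

Lemma mx_actZ A c f : mx_act A (c *: f) = c *: mx_act A f.
Proof. exact: comp_mpolyZ. Qed.

Lemma mx_actM A B f : mx_act (A * B) f = mx_act B (mx_act A f).
Proof.
apply: (rmorph_mpoly_ext (f := comp_mpoly _) (g := comp_mpoly _ \o comp_mpoly _)) => [c|i] /=.
  by rewrite !comp_mpolyC.
rewrite -!/(mx_act _ _) !mx_actX {1}/mx_act linear_sum.
under [RHS]eq_bigr => j _ do rewrite linearZ /= -/(mx_act _ _) mx_actX scaler_sumr.
rewrite exchange_big /=; apply: eq_bigr => k _.
by rewrite mxE scaler_suml; apply: eq_bigr => j _; rewrite scalerA.
Qed.

Lemma mx_act1 f : mx_act 1 f = f.
Proof.
apply: (rmorph_mpoly_ext (f := comp_mpoly _) (g := idfun)) => [c|i] /=.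
  exact: comp_mpolyC.
rewrite -/(mx_act _ _) mx_actX (bigD1 i) //= big1 => [|j /negPf ji].
  by rewrite mxE eqxx scale1r addr0.
by rewrite mxE eq_sym ji scale0r.
Qed.

End MatrixAction.

Section SemiInvariants.
Variable F : fieldType.
Implicit Types (A M : 'M[F]_3) (f g p : {mpoly F[3]}).

Lemma msize_unit n (p : {mpoly F[n]}) :
  p != 0 -> (msize p == 1%N) = (p \is a GRing.unit).
Proof.
move=> p0; apply/idP/idP => [/eqP/eq_leq/msize1_polyC Ep|/unitrPr [q pq]].
  have c0 : p@_0 != 0 by apply: contraNneq p0 => e; rewrite Ep e.
  by apply/unitrPr; exists (p@_0)^-1%:MP; rewrite {1}Ep -mpolyCM mulfV.
have q0 : q != 0 by apply: contra_eq_neq pq => ->; rewrite mulr0 eq_sym oner_eq0.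
have := msizeM p0 q0; rewrite pq msize1.
have := msize_poly_eq0 p; have := msize_poly_eq0 q; rewrite (negbTE p0) (negbTE q0).
by move: (msize p) (msize q) => a b; lia.
Qed.

Lemma irreducible_mirreducible p : irreducibler p -> mirreducible p.
Proof.
move=> [p0 pNU p_min]; split=> [|a b Ep].
  by rewrite ltn_neqAle eq_sym msize_unit // pNU lt0n msize_poly_eq0.
have [a0 b0] : a != 0 /\ b != 0 by apply/andP; rewrite -negb_or -mulf_eq0 -Ep.
by case: (p_min a b Ep); rewrite -msize_unit // => /eqP ->; [left|right].
Qed.

Lemma same_divisor_scale f g : f != 0 -> g != 0 -> same_divisor g f ->
  exists2 c, c != 0 & g = c *: f.
Proof.
move=> f0 g0 fg; have F_ufd := mpoly_ufd 3 F.
have [r Eg] : dvdr f g.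
  by apply: dvdr_prime_powers => // p /irreducible_mirreducible p_irr k /(fg p p_irr k).
have [s Ef] : dvdr g f.
  by apply: dvdr_prime_powers => // p /irreducible_mirreducible p_irr k /(fg p p_irr k).
have rU : r \is a GRing.unit.
  apply/unitrPr; exists s; apply: (mulIf f0).
  by rewrite [r * s]mulrC -mulrA mul1r {2}Ef Eg.
have r0 : r != 0 by apply: contraTneq rU => ->; rewrite unitr0.
move: rU; rewrite -msize_unit // => /eqP/eq_leq/msize1_polyC Er.
exists r@_0; first by apply: contraNneq r0 => e; rewrite Er e.
by rewrite Eg {1}Er mul_mpolyC.
Qed.

Lemma pushforward_eigen M f : M \in unitmx -> f != 0 ->
  same_divisor (pushforward_poly M f) f -> exists2 a, a != 0 & mx_act M f = a *: f.
Proof.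
move=> MU f0; set g := pushforward_poly M f => fg.
have Mg : mx_act M g = f by rewrite -mx_actM mulVr // mx_act1.
have g0 : g != 0 by apply: contra_neq f0 => g0; rewrite -Mg g0 /mx_act comp_mpoly0.
have [c c0 Eg] := same_divisor_scale f0 g0 fg.
exists c^-1; first by rewrite invr_eq0.
by rewrite -[in RHS]Mg Eg mx_actZ scalerA mulVf // scale1r.
Qed.

Lemma mx_actV_eigen A a f : A \in unitmx -> a != 0 -> mx_act A f = a *: f ->
  mx_act A^-1 f = a^-1 *: f.
Proof.
move=> AU a0 Af; rewrite -[in RHS](mx_act1 f) -(mulrV AU) mx_actM Af mx_actZ.
by rewrite scalerA mulVf // scale1r.
Qed.

End SemiInvariants.

Definition ring_commutator (R : unitRingType) (x y : R) := x^-1 * y^-1 * x * y.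

Lemma ring_commutatorV (R : unitRingType) (x y : R) :
  x \is a GRing.unit -> y \is a GRing.unit ->
  (ring_commutator x y)^-1 = ring_commutator y x.
Proof.
move=> xU yU; have xyU : x^-1 / y \is a GRing.unit by rewrite unitrMl ?unitrV.
have xyxU : x^-1 / y * x \is a GRing.unit by rewrite unitrMl.
by rewrite /ring_commutator !invrM ?unitrV ?invrK // !mulrA.
Qed.

Lemma ring_commutator_comm (R : comUnitRingType) (x y : R) :
  x \is a GRing.unit -> y \is a GRing.unit -> ring_commutator x y = 1.
Proof. by move=> xU yU; rewrite /ring_commutator mulrAC divrK // mulVr. Qed.

Lemma det_ring_commutator (F : fieldType) n (A B : 'M[F]_n.+1) :
  A \in unitmx -> B \in unitmx -> \det (ring_commutator A B) = 1.
Proof.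
rewrite !unitmxE => AU BU.
by rewrite /ring_commutator !detM !det_inv -/(ring_commutator _ _) ring_commutator_comm.
Qed.

Lemma mx_act_ring_commutator (F : fieldType) (A B : 'M[F]_3) a b f :
  A \in unitmx -> B \in unitmx -> a != 0 -> b != 0 ->
  mx_act A f = a *: f -> mx_act B f = b *: f -> mx_act (ring_commutator A B) f = f.
Proof.
move=> AU BU a0 b0 Af Bf.
rewrite /ring_commutator !mx_actM (mx_actV_eigen AU a0 Af) !mx_actZ.
rewrite (mx_actV_eigen BU b0 Bf) !mx_actZ Af mx_actZ Bf !scalerA.
by rewrite -/(ring_commutator a b) ring_commutator_comm ?unitfE // scale1r.
Qed.

Section ProjectiveEquality.
Variable F : fieldType.
Implicit Types A B D : 'M[F]_3.

Lemma proj_eq_refl A : proj_eq A A.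
Proof. by exists 1; rewrite oner_neq0 scale1r. Qed.

Lemma proj_eq_sym A B : proj_eq A B -> proj_eq B A.
Proof.
move=> [c [c0 ->]]; exists c^-1; rewrite invr_eq0 c0.
by rewrite scalerA mulVf // scale1r.
Qed.

Lemma proj_eq_trans A B D : proj_eq A B -> proj_eq B D -> proj_eq A D.
Proof.
move=> [c [c0 ->]] [d [d0 ->]]; exists (c * d).
by rewrite mulf_neq0 // scalerA.
Qed.

Lemma proj_eq_mul A1 A2 B1 B2 :
  proj_eq A1 A2 -> proj_eq B1 B2 -> proj_eq (A1 * B1) (A2 * B2).
Proof.
move=> [a [a0 ->]] [b [b0 ->]]; exists (a * b).
by rewrite mulf_neq0 // -scalerAl -scalerAr scalerA.
Qed.

End ProjectiveEquality.

Lemma simple_nonabelian_perfect (gT : finGroupType) (G : {group gT}) :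
  simple G -> ~~ abelian G -> (G^`(1))%g = G.
Proof.
move=> /simpleP[_ simG] nabG; case: (simG _ (der_normal 1 G)) => // der1.
by case/negP: nabG; apply/derG1P.
Qed.

Section CommutatorLift.
Variables (F : fieldType) (gT : finGroupType) (rho : gT -> 'M[F]_3).
Hypothesis rho_rep : proj_faithful_rep rho.

Lemma rho_unit x : rho x \in unitmx.
Proof. by case: rho_rep. Qed.

Lemma rho_mul x y : proj_eq (rho (x * y)%g) (rho x * rho y).
Proof. by case: rho_rep => _ rhoM _; exact: rhoM. Qed.

Lemma rho_1 : proj_eq (rho 1%g) 1.
Proof.
have [c [c0 E]] := rho_mul 1 1; rewrite mulg1 in E.
exists c^-1; rewrite invr_eq0 c0; split=> //; apply: (mulIr (rho_unit 1)).
by rewrite -scalerAl mul1r {3}E scalerA mulVf // scale1r.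
Qed.

Lemma rho_inv x : proj_eq (rho x^-1%g) (rho x)^-1.
Proof.
have [c [c0 E]] : proj_eq (rho x^-1%g * rho x) 1.
  by apply: proj_eq_trans (proj_eq_sym (rho_mul _ _)) _; rewrite mulVg; exact: rho_1.
by exists c; split=> //; rewrite -[LHS](mulrK (rho_unit x)) E -scalerAl mul1r.
Qed.

Lemma rho_commutator x y : proj_eq (ring_commutator (rho x) (rho y)) (rho [~ x, y]).
Proof.
rewrite /commg /conjg !mulgA; apply: proj_eq_sym.
apply: proj_eq_trans (rho_mul _ y) (proj_eq_mul _ (proj_eq_refl _)).
apply: proj_eq_trans (rho_mul _ x) (proj_eq_mul _ (proj_eq_refl _)).
exact: proj_eq_trans (rho_mul _ _) (proj_eq_mul (rho_inv x) (rho_inv y)).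
Qed.

Local Notation comm_prod s := (\prod_(xy <- s) ring_commutator (rho xy.1) (rho xy.2)).

Definition comm_lift (A : 'M[F]_3) : Prop := exists s : seq (gT * gT), A = comm_prod s.

Lemma ring_commutator_rho_unit x y : ring_commutator (rho x) (rho y) \in unitmx.
Proof. by rewrite unitmxE det_ring_commutator ?rho_unit ?unitr1. Qed.

Lemma det_comm_prod s : \det (comm_prod s) = 1.
Proof.
elim: s => [|xy s IH]; first by rewrite big_nil det1.
by rewrite big_cons detM IH det_ring_commutator ?rho_unit ?mulr1.
Qed.

Lemma comm_prodV s :
  (comm_prod s)^-1 = comm_prod (rev [seq (xy.2, xy.1) | xy <- s]).
Proof.
elim: s => [|xy s IH]; first by rewrite big_nil invr1.
rewrite big_cons invrM ?ring_commutator_rho_unit ?unitmxE ?det_comm_prod ?unitr1 //.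
by rewrite IH ring_commutatorV ?rho_unit // map_cons rev_cons big_rcons.
Qed.

Lemma comm_lift_SL3 : SL3_subgroup comm_lift.
Proof.
split=> [|_ _ [s1 ->] [s2 ->]|_ [s ->]|_ [s ->]].
- by exists [::]; rewrite big_nil.
- by exists (s1 ++ s2); rewrite big_cat.
- by exists (rev [seq (xy.2, xy.1) | xy <- s]); exact: comm_prodV.
- exact: det_comm_prod.
Qed.

Lemma comm_prod_proj s : exists g, proj_eq (comm_prod s) (rho g).
Proof.
elim: s => [|[x y] s [g IH]]; first by exists 1%g; rewrite big_nil; exact: proj_eq_sym rho_1.
exists ([~ x, y] * g)%g; rewrite big_cons.
exact: proj_eq_trans (proj_eq_mul (rho_commutator x y) IH) (proj_eq_sym (rho_mul _ _)).
Qed.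

Lemma comm_lift_image : ([~: [set: gT], [set: gT]])%g = [set: gT] ->
  proj_image_eq rho comm_lift.
Proof.
move=> perfect; split=> [_ [s ->]|g]; first exact: comm_prod_proj.
have : g \in ([~: [set: gT], [set: gT]])%g by rewrite perfect inE.
case/gen_prodgP=> n [c c_comm ->].
pose Q h := exists A, comm_lift A /\ proj_eq A (rho h).
apply: (big_ind Q) => [|h1 h2 [A1 [[s1 ->] e1]] [A2 [[s2 ->] e2]]|i _].
- by exists 1; split; [exists [::]; rewrite big_nil | exact: proj_eq_sym rho_1].
- exists (comm_prod (s1 ++ s2)); split; first by exists (s1 ++ s2).
  rewrite big_cat; exact: proj_eq_trans (proj_eq_mul e1 e2) (proj_eq_sym (rho_mul _ _)).
case/imset2P: (c_comm i) => x y _ _ ->.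
exists (comm_prod [:: (x, y)]); split; first by exists [:: (x, y)].
by rewrite big_seq1; exact: rho_commutator.
Qed.

Lemma comm_lift_fixes f : f != 0 ->
  (forall g, same_divisor (pushforward_poly (rho g) f) f) ->
  forall A, comm_lift A -> mx_act A f = f.
Proof.
move=> f0 f_inv _ [s ->]; elim: s => [|[x y] s IH]; first by rewrite big_nil mx_act1.
have [a a0 xf] := pushforward_eigen (rho_unit x) f0 (f_inv x).
have [b b0 yf] := pushforward_eigen (rho_unit y) f0 (f_inv y).
by rewrite big_cons mx_actM (mx_act_ring_commutator (rho_unit x) (rho_unit y) a0 b0 xf yf).
Qed.

End CommutatorLift.

Unset Implicit Arguments.

Theorem mainTheorem8 (R : realType) (gT : finGroupType)
  (rho : gT -> 'M[(complex R)]_3) :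
  proj_faithful_rep rho ->
  simple [set: gT] -> ~~ abelian [set: gT] ->
  exists Gt : 'M[(complex R)]_3 -> Prop,
    [/\ SL3_subgroup Gt, proj_image_eq rho Gt &
      forall (d : nat) (f : {mpoly (complex R)[3]}),
        (0 < d)%N -> f != 0 -> f \is d.-homog ->
        (forall g : gT, same_divisor (pushforward_poly (rho g) f) f) ->
        exists h : {mpoly (complex R)[3]},
          [/\ exists e : nat, h \is e.-homog,
              (forall A, Gt A -> mx_act A h = h)
            & same_divisor h f]].
Proof.
move=> rho_rep simG nabG; exists (comm_lift rho); split.
- exact: comm_lift_SL3.
- exact: comm_lift_image rho_rep (simple_nonabelian_perfect simG nabG).
move=> d f _ f0 f_hom f_inv; exists f; split; first by exists d.
  exact: comm_lift_fixes.
by move=> p _ k.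
Qed.
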